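(* The map $P:\mu^{-1}(0)^{rss}\to\{(x_1,\dots,x_n,y_1,\dots,y_n)\in\mathbb{C}^{2n}: x_\iota\ne x_\gamma\text{ for }\iota\ne\gamma\}$, $(r,s,i,j)\mapsto(r_{11},\dots,r_{nn},s'_{11},\dots,s'_{nn})$ with $s'_{\iota\iota}=\operatorname{tr}(L^\iota(r)s)$, is a well-defined regular, $B$-invariant, surjective map that separates orbit closures (points of $\mu^{-1}(0)^{rss}$ whose $B$-orbit closures in $\mu^{-1}(0)^{rss}$ are disjoint have distinct images).
   Context: $B\subset GL_n(\mathbb{C})$ is the group of invertible upper triangular matrices, $\mathfrak{b}$ the upper triangular matrices, $\mathfrak{n}^+$ the strictly upper triangular matrices, $\mathfrak{b}^*=\mathfrak{gl}_n/\mathfrak{n}^+$, $(\mathbb{C}^n)^*$ row vectors. $B$ acts on $T^*(\mathfrak{b}\times\mathbb{C}^n)=\mathfrak{b}\times\mathfrak{b}^*\times\mathbb{C}^n\times(\mathbb{C}^n)^*$ by $b\cdot(r,s,i,j)=(brb^{-1},bsb^{-1},bi,jb^{-1})$, with moment map $\mu(r,s,i,j)=[r,s]+ij \bmod\mathfrak{n}^+\in\mathfrak{b}^*$. $\mu^{-1}(0)^{rss}$ is the set of $(r,s,i,j)\in\mu^{-1}(0)$ such that $r$ has pairwise distinct eigenvalues (diagonal entries). For such $r$ put $l_k(r)=r-r_{kk}I$ and $L^\iota(r)=\big[\operatorname{tr}\prod_{k\ne\iota}l_k(r)\big]^{-1}\prod_{k\ne\iota}l_k(r)$, an upper triangular matrix;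 $\operatorname{tr}(L^\iota(r)s)$ is well defined for $s\in\mathfrak{gl}_n/\mathfrak{n}^+$. *)

(* The complex numbers are R[i] for an
   arbitrary R : realType (i.e. a model of the reals), with its Euclidean
   (norm) topology; matrix spaces and products carry the product topology. *)
From mathcomp Require Import all_boot all_order all_algebra.
From mathcomp Require Import complex.
From mathcomp Require Import all_classical all_reals all_analysis.
Import numFieldNormedType.Exports.
Set Implicit Arguments. Unset Strict Implicit. Unset Printing Implicit Defensive.
Import Order.TTheory GRing.Theory Num.Theory.
Local Open Scope ring_scope.
Local Open Scope classical_set_scope.

Definition Cplx (R : realType) : numFieldType := R[i].

Section Defs.
Variables (R : realType) (n : nat).
Local Notation C := (Cplx R).

(* the ambient space  b x b^* x C^n x (C^n)^*.  An element of
   b^* = gl_n / n^+ is represented by its canonical representative,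
   a lower triangular matrix (entries (a,c) with c <= a). *)
Definition bquad := ('M[C]_n * 'M[C]_n * 'cV[C]_n * 'rV[C]_n)%type.

Definition pr_r (x : bquad) : 'M[C]_n := x.1.1.1.
Definition pr_s (x : bquad) : 'M[C]_n := x.1.1.2.
Definition pr_i (x : bquad) : 'cV[C]_n := x.1.2.
Definition pr_j (x : bquad) : 'rV[C]_n := x.2.

Definition upper (M : 'M[C]_n) : Prop := forall a c : 'I_n, (c < a)%N -> M a c = 0.
Definition lower (M : 'M[C]_n) : Prop := forall a c : 'I_n, (a < c)%N -> M a c = 0.
(* the projection gl_n -> gl_n / n^+ (kill the strictly upper part) *)
Definition modnp (M : 'M[C]_n) : 'M[C]_n :=
  \matrix_(a, c) if (c <= a)%N then M a c else 0.

Definition inB (b : 'M[C]_n) : Prop := upper b /\ b \in unitmx.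

Definition act (b : 'M[C]_n) (x : bquad) : bquad :=
  (b *m pr_r x *m invmx b, modnp (b *m pr_s x *m invmx b),
   b *m pr_i x, pr_j x *m invmx b).

Definition mu (x : bquad) : 'M[C]_n :=
  modnp (pr_r x *m pr_s x - pr_s x *m pr_r x + pr_i x *m pr_j x).

Definition rss_zero : set bquad :=
  [set x | upper (pr_r x) /\ lower (pr_s x) /\ mu x = 0 /\
           forall a c : 'I_n, a != c -> pr_r x a a != pr_r x c c].

Definition lk (r : 'M[C]_n) (k : 'I_n) : 'M[C]_n := r - (r k k)%:M.
Definition Lprod (r : 'M[C]_n) (iota : 'I_n) : 'M[C]_n :=
  \prod_(k < n | k != iota) lk r k.
Definition Lmat (r : 'M[C]_n) (iota : 'I_n) : 'M[C]_n :=
  (\tr (Lprod r iota))^-1 *: Lprod r iota.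

Definition sprime (r s : 'M[C]_n) (iota : 'I_n) : C := \tr (Lmat r iota *m s).

Definition Pmap (x : bquad) : 'rV[C]_n * 'rV[C]_n :=
  (\row_k pr_r x k k, \row_k sprime (pr_r x) (pr_s x) k).

Inductive polyfun : (bquad -> C) -> Prop :=
  | pf_const (c : C) : polyfun (fun _ => c)
  | pf_r (a c : 'I_n) : polyfun (fun x => pr_r x a c)
  | pf_s (a c : 'I_n) : polyfun (fun x => pr_s x a c)
  | pf_i (a : 'I_n) : polyfun (fun x => pr_i x a 0)
  | pf_j (a : 'I_n) : polyfun (fun x => pr_j x 0 a)
  | pf_add f g : polyfun f -> polyfun g -> polyfun (fun x => f x + g x)
  | pf_mul f g : polyfun f -> polyfun g -> polyfun (fun x => f x * g x).

Definition regular_on (D : set bquad) (F : bquad -> C) : Prop :=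
  exists f g, polyfun f /\ polyfun g /\
    forall x, D x -> g x != 0 /\ F x = f x / g x.

Definition Borbit (x : bquad) : set bquad := [set act b x | b in inB].

End Defs.

(* The Lagrange projector [L^iota(r)] is an upper triangular polynomial in [r]
   whose diagonal is the indicator of [iota].  Hence [tr (L^iota(r) s)] only sees
   [s] modulo [n^+], it is a quotient of polynomials whose denominator
   [prod_(k <> iota) (r_iota,iota - r_kk)] does not vanish, and it does not change
   when [(r, s)] is conjugated by [B]; on a diagonal point [(diag x, diag y, 0, 0)]
   the map returns [(x, y)].
   For separation, conjugate by the unitriangular matrix whose [c]-th column is the
   [r_cc]-eigenvector [L^c(r) e_c], so that [r] becomes diagonal.  The moment map
   equation then reads [(r_aa - r_cc) s_ac + i_a j_c = 0] for [c <= a], so that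
   [i_c j_c = 0], and [s_ac = 0] for [c < a] unless [i_a <> 0 = i_c].  A diagonal
   element of [B] then scales [i], [j] by [e] and the strictly lower part of [s] by
   [e^2]; letting [e -> 0] shows that every orbit closure contains the diagonal
   point with the same image, so points with equal images have intersecting orbit
   closures. *)

From mathcomp Require Import all_boot all_order all_algebra.
From mathcomp Require Import complex.
From mathcomp Require Import all_classical all_reals all_analysis.
Import numFieldNormedType.Exports.
Import Order.TTheory GRing.Theory Num.Theory.
Local Open Scope ring_scope.
Local Open Scope classical_set_scope.
Set Implicit Arguments. Unset Strict Implicit. Unset Printing Implicit Defensive.

Section UpperTriangular.
Variables (R : realType) (n : nat).
Local Notation C := (Cplx R).
Implicit Types (A B M N U b : 'M[C]_n) (x : C).

Definition strictly_upper N := forall a c : 'I_n, (c <= a)%N -> N a c = 0.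

Lemma upper_trig A : upper A -> is_trig_mx A^T.
Proof. by move=> uA; apply/is_trig_mxP => a c ac; rewrite mxE uA. Qed.

Lemma det_upper A : upper A -> \det A = \prod_a A a a.
Proof.
move=> uA; rewrite -det_tr det_trig; last exact: upper_trig.
by apply: eq_bigr => a _; rewrite mxE.
Qed.

Lemma upper_diag_mx (d : 'rV[C]_n) : upper (diag_mx d).
Proof. by move=> a c ca; rewrite mxE -val_eqE gtn_eqF. Qed.

Lemma lower_diag_mx (d : 'rV[C]_n) : lower (diag_mx d).
Proof. by move=> a c ac; rewrite mxE -val_eqE ltn_eqF. Qed.

Lemma upper_scalar x : upper (x%:M : 'M[C]_n).
Proof. by move=> a c ca; rewrite mxE -val_eqE gtn_eqF. Qed.

Lemma upperB A B : upper A -> upper B -> upper (A - B).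
Proof. by move=> uA uB a c ca; rewrite !mxE uA // uB // subrr. Qed.

Lemma upperZ x A : upper A -> upper (x *: A).
Proof. by move=> uA a c ca; rewrite mxE uA // mulr0. Qed.

Lemma upperM A B : upper A -> upper B -> upper (A *m B).
Proof.
move=> uA uB a c ca; rewrite mxE big1 // => e _.
have [ea|ae] := ltnP e a; first by rewrite uA // mul0r.
by rewrite uB ?mulr0 // (leq_trans ca ae).
Qed.

Lemma upper_prod (I : Type) (s : seq I) (P : pred I) (F : I -> 'M[C]_n) :
  (forall k, upper (F k)) -> upper (\prod_(k <- s | P k) F k).
Proof.
move=> uF; apply: big_ind => //; first exact: upper_scalar.
by move=> A B uA uB; rewrite -mulmxE; apply: upperM.
Qed.

Lemma upper_mul_diag A B a : upper A -> upper B -> (A *m B) a a = A a a * B a a.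
Proof.
move=> uA uB; rewrite mxE (bigD1 a) //= big1 ?addr0 // => e ea.
have [lt_ea|lt_ae|/val_inj eq_ea] := ltngtP e a.
- by rewrite uA // mul0r.
- by rewrite uB // mulr0.
- by rewrite eq_ea eqxx in ea.
Qed.

Lemma upper_prod_diag (I : Type) (s : seq I) (P : pred I) (F : I -> 'M[C]_n) a :
  (forall k, upper (F k)) -> (\prod_(k <- s | P k) F k) a a = \prod_(k <- s | P k) F k a a.
Proof.
move=> uF.
have [] // := @big_ind2 _ _ (fun (M : 'M[C]_n) y => upper M /\ M a a = y)
  1 *%R 1 *%R _ _ _ s P F (fun k => F k a a).
- by split; [exact: upper_scalar | rewrite mxE eqxx].
- move=> A y B y' [uA <-] [uB <-]; rewrite -mulmxE.
  by split; [exact: upperM | exact: upper_mul_diag].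
Qed.

Lemma strictly_upper_mull U N : upper U -> strictly_upper N -> strictly_upper (U *m N).
Proof.
move=> uU sN a c ca; rewrite mxE big1 // => e _.
have [ea|ae] := ltnP e a; first by rewrite uU // mul0r.
by rewrite sN ?mulr0 // (leq_trans ca ae).
Qed.

Lemma strictly_upper_mulr N U : strictly_upper N -> upper U -> strictly_upper (N *m U).
Proof.
move=> sN uU a c ca; rewrite mxE big1 // => e _.
have [ea|ae] := leqP e a; first by rewrite sN // mul0r.
by rewrite uU ?mulr0 // (leq_ltn_trans ca ae).
Qed.

Lemma strictly_upper_modnp M : strictly_upper (modnp M - M).
Proof. by move=> a c ca; rewrite !mxE ca subrr. Qed.

Lemma modnp_eq M M' : strictly_upper (M - M') -> modnp M = modnp M'.
Proof.
move=> sMM'; apply/matrixP => a c; rewrite !mxE; case: ifP => // ca.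
by apply/eqP; rewrite -subr_eq0; have := sMM' a c ca; rewrite !mxE => ->.
Qed.

Lemma lower_modnp M : lower (modnp M).
Proof. by move=> a c ac; rewrite mxE leqNgt ac. Qed.

Lemma modnp0 : modnp (0 : 'M[C]_n) = 0.
Proof. by apply/matrixP => a c; rewrite !mxE if_same. Qed.

Lemma modnpD M M' : modnp (M + M') = modnp M + modnp M'.
Proof. by apply/matrixP => a c; rewrite !mxE; case: ifP; rewrite ?addr0. Qed.

Lemma modnpB M M' : modnp (M - M') = modnp M - modnp M'.
Proof. by apply/matrixP => a c; rewrite !mxE; case: ifP; rewrite ?subr0. Qed.

Lemma modnp_mull U M : upper U -> modnp (U *m modnp M) = modnp (U *m M).
Proof.
by move=> uU; apply: modnp_eq; rewrite -mulmxBr; exact/strictly_upper_mull/strictly_upper_modnp.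
Qed.

Lemma modnp_mulr M U : upper U -> modnp (modnp M *m U) = modnp (M *m U).
Proof.
by move=> uU; apply: modnp_eq; rewrite -mulmxBl; exact/strictly_upper_mulr/uU/strictly_upper_modnp.
Qed.

Lemma modnp_conj U M U' : upper U -> upper U' ->
  modnp (U *m modnp M *m U') = modnp (U *m M *m U').
Proof.
move=> uU uU'; apply: modnp_eq; rewrite -mulmxBl -mulmxBr.
exact/strictly_upper_mulr/uU'/strictly_upper_mull/strictly_upper_modnp.
Qed.

Lemma tr_modnp U M : upper U -> \tr (U *m modnp M) = \tr (U *m M).
Proof.
move=> uU; apply/eqP; rewrite -subr_eq0 -linearB /= -mulmxBr.
by apply/eqP/big1 => a _; apply: strictly_upper_mull (strictly_upper_modnp M) _ _ _.
Qed.

Lemma unitmx_upper_diag_neq0 b a : upper b -> b \in unitmx -> b a a != 0.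
Proof. by move=> ub; rewrite unitmxE unitfE det_upper // => /prodf_neq0; apply. Qed.

Lemma upper_inv b : upper b -> b \in unitmx -> upper (invmx b).
Proof.
move=> ub bu a; suff inv0 m (c : 'I_n) : c = m :> nat -> (c < a)%N -> invmx b a c = 0.
  by move=> c; apply: inv0.
elim/ltn_ind: m c => m IH c cm ca.
have /matrixP/(_ a c) := mulVmx bu; rewrite !mxE -val_eqE gtn_eqF //.
rewrite (bigD1 c) //= big1 ?addr0 => [/eqP|e ec].
  by rewrite mulf_eq0 (negPf (unitmx_upper_diag_neq0 c ub bu)) orbF => /eqP.
have [lt_ec|lt_ce|/val_inj eq_ec] := ltngtP e c.
- by rewrite (IH e) -?cm // ?mul0r // (ltn_trans lt_ec).
- by rewrite ub // mulr0.
- by rewrite eq_ec eqxx in ec.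
Qed.

Lemma inB_inv b : inB b -> inB (invmx b).
Proof. by move=> [ub bu]; split; [exact: upper_inv | rewrite unitmx_inv]. Qed.

Lemma inB_mul b b' : inB b -> inB b' -> inB (b *m b').
Proof. by move=> [ub bu] [ub' bu']; split; [exact: upperM | rewrite unitmx_mul bu]. Qed.

Lemma conj_upper_diag b A a : inB b -> upper A -> (b *m A *m invmx b) a a = A a a.
Proof.
move=> [ub bu] uA; have uV := upper_inv ub bu.
rewrite !upper_mul_diag //; last exact: upperM.
have := upper_mul_diag a uV ub; rewrite mulVmx // mxE eqxx => /esym bV.
by rewrite mulrAC [_ * invmx b a a]mulrC bV mul1r.
Qed.

Lemma char_poly_upper A : upper A -> char_poly A = \prod_(k < n) ('X - (A k k)%:P).
Proof.
move=> uA; have -> : char_poly A = char_poly A^T.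
  by rewrite /char_poly -det_tr; congr (\det _); apply/matrixP => a c; rewrite !mxE eq_sym.
rewrite char_poly_trig; last exact: upper_trig.
by apply: eq_bigr => k _; rewrite mxE.
Qed.

End UpperTriangular.

Definition distinct_diag (R : realType) n (r : 'M[Cplx R]_n) :=
  forall a c : 'I_n, a != c -> r a a != r c c.

Definition Lpoly (R : realType) n (r : 'M[Cplx R]_n) (i : 'I_n) : {poly Cplx R} :=
  \prod_(k < n | k != i) ('X - (r k k)%:P).

Lemma Lprod_horner (R : realType) n (r : 'M[Cplx R]_n.+1) i :
  Lprod r i = horner_mx r (Lpoly r i).
Proof.
rewrite /Lprod /Lpoly rmorph_prod; apply: eq_bigr => k _.
by rewrite rmorphB /= horner_mx_X horner_mx_C.
Qed.

Section Lagrange.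
Variables (R : realType) (n : nat).
Local Notation C := (Cplx R).
Implicit Types (r b : 'M[C]_n) (d : 'rV[C]_n).

Lemma lk_upper r k : upper r -> upper (lk r k).
Proof. by move=> ur; apply: upperB => //; apply: upper_scalar. Qed.

Lemma Lprod_upper r i : upper r -> upper (Lprod r i).
Proof. by move=> ur; apply: upper_prod => k; apply: lk_upper. Qed.

Lemma Lmat_upper r i : upper r -> upper (Lmat r i).
Proof. by move=> ur; apply/upperZ/Lprod_upper. Qed.

Lemma Lprod_diag r i a : upper r -> Lprod r i a a = \prod_(k < n | k != i) (r a a - r k k).
Proof.
move=> ur; rewrite upper_prod_diag => [|k]; last exact: lk_upper.
by apply: eq_bigr => k _; rewrite !mxE eqxx mulr1n.
Qed.

Lemma Lprod_diag_neq r i a : upper r -> a != i -> Lprod r i a a = 0.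
Proof. by move=> ur ai; rewrite Lprod_diag // (bigD1 a) //= subrr mul0r. Qed.

Lemma tr_Lprod r i : upper r -> \tr (Lprod r i) = \prod_(k < n | k != i) (r i i - r k k).
Proof.
move=> ur; rewrite /mxtrace (bigD1 i) //= big1 ?addr0; first exact: Lprod_diag.
by move=> a ai; apply: Lprod_diag_neq.
Qed.

Lemma tr_Lprod_neq0 r i : upper r -> distinct_diag r -> \tr (Lprod r i) != 0.
Proof.
move=> ur dr; rewrite tr_Lprod //; apply/prodf_neq0 => k ki.
by rewrite subr_eq0 dr // eq_sym.
Qed.

Lemma Lmat_diag r i a : upper r -> distinct_diag r -> Lmat r i a a = (a == i)%:R.
Proof.
move=> ur dr; rewrite mxE; have [->|ai] := eqVneq a i.
  by rewrite Lprod_diag // -tr_Lprod // mulVf //; apply: tr_Lprod_neq0.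
by rewrite Lprod_diag_neq // mulr0.
Qed.

Lemma mul_Lprod r c : upper r -> r *m Lprod r c = r c c *: Lprod r c.
Proof.
case: n r c => [|n'] r c ur; first by case: c.
have CH : (r - (r c c)%:M) *m Lprod r c = 0.
  have -> : r - (r c c)%:M = horner_mx r ('X - (r c c)%:P).
    by rewrite rmorphB /= horner_mx_X horner_mx_C.
  rewrite Lprod_horner mulmxE -rmorphM /=.
  by have := Cayley_Hamilton r; rewrite char_poly_upper // (bigD1 c).
by rewrite -[X in X *m _](subrK (r c c)%:M) mulmxDl CH add0r mul_scalar_mx.
Qed.

Lemma mul_Lmat r c : upper r -> r *m Lmat r c = r c c *: Lmat r c.
Proof. by move=> ur; rewrite /Lmat -scalemxAr mul_Lprod // !scalerA mulrC. Qed.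

Lemma mxtrace_conj b (A : 'M[C]_n) : b \in unitmx -> \tr (b *m A *m invmx b) = \tr A.
Proof. by move=> bu; rewrite mxtrace_mulC mulmxA mulVmx // mul1mx. Qed.

Lemma conj_mulmx b (A B : 'M[C]_n) : b \in unitmx ->
  (b *m A *m invmx b) *m (b *m B *m invmx b) = b *m (A *m B) *m invmx b.
Proof. by move=> bu; rewrite !mulmxA mulmxKV. Qed.

Lemma Lprod_conj b r i : inB b -> upper r ->
  Lprod (b *m r *m invmx b) i = b *m Lprod r i *m invmx b.
Proof.
case: n b r i => [|n'] b r i bB ur; first by case: i.
rewrite !Lprod_horner -horner_mx_uconj; last by case: bB.
by congr horner_mx; apply: eq_bigr => k _; rewrite conj_upper_diag.
Qed.

Lemma Lmat_conj b r i : inB b -> upper r ->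
  Lmat (b *m r *m invmx b) i = b *m Lmat r i *m invmx b.
Proof.
move=> bB ur; rewrite /Lmat Lprod_conj // mxtrace_conj; last by case: bB.
by rewrite scalemxAl scalemxAr.
Qed.

Lemma sprime_conj b r (S : 'M[C]_n) i : inB b -> upper r ->
  sprime (b *m r *m invmx b) (b *m S *m invmx b) i = sprime r S i.
Proof.
move=> bB ur; have bu : b \in unitmx by case: bB.
by rewrite /sprime Lmat_conj // conj_mulmx // mxtrace_conj.
Qed.

Lemma sprime_modnp r (S : 'M[C]_n) i : upper r -> sprime r (modnp S) i = sprime r S i.
Proof. by move=> ur; apply/tr_modnp/Lmat_upper. Qed.

Lemma Lprod_diag_mx_is_diag d i : is_diag_mx (Lprod (diag_mx d) i).
Proof.
case: n d i => [|n'] d i; first by case: i.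
by rewrite Lprod_horner horner_mx_diag diag_mx_is_diag.
Qed.

Lemma sprime_diag_mx d (S : 'M[C]_n) i : distinct_diag (diag_mx d) ->
  sprime (diag_mx d) S i = S i i.
Proof.
move=> dd; rewrite /sprime; have -> : Lmat (diag_mx d) i = diag_mx (\row_a (a == i)%:R).
  apply/matrixP => a c; have [<-|ac] := eqVneq a c.
    by rewrite (Lmat_diag _ _ (upper_diag_mx d)) // [RHS]mxE eqxx mulr1n mxE.
  rewrite [LHS]mxE (is_diag_mxP (Lprod_diag_mx_is_diag d i)) //.
  by rewrite mulr0 [RHS]mxE (negPf ac).
rewrite /mxtrace (bigD1 i) //= big1 => [|a ai]; rewrite mul_diag_mx !mxE.
  by rewrite eqxx mul1r addr0.
by rewrite (negPf ai) mul0r.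
Qed.

Definition eigmx r : 'M[C]_n := \matrix_(a, c) Lmat r c a c.

Lemma eigmx_upper r : upper r -> upper (eigmx r).
Proof. by move=> ur a c ca; rewrite mxE Lmat_upper. Qed.

Lemma eigmx_unit r : upper r -> distinct_diag r -> eigmx r \in unitmx.
Proof.
move=> ur dr; rewrite unitmxE unitfE det_upper; last exact: eigmx_upper.
by apply/prodf_neq0 => a _; rewrite mxE Lmat_diag // eqxx oner_neq0.
Qed.

Lemma mul_eigmx r : upper r -> r *m eigmx r = eigmx r *m diag_mx (\row_a r a a).
Proof.
move=> ur; apply/matrixP => a c.
have -> : (r *m eigmx r) a c = (r *m Lmat r c) a c.
  by rewrite !mxE; apply: eq_bigr => k _; rewrite mxE.
by rewrite mul_Lmat // mul_mx_diag !mxE mulrC.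
Qed.

End Lagrange.

Section Action.
Variables (R : realType) (n : nat).
Local Notation C := (Cplx R).
Implicit Types (b : 'M[C]_n) (x : bquad R n).

Lemma invmx_eq b b' : b *m b' = 1%:M -> invmx b = b'.
Proof. by move=> bb'; have [bu _] := mulmx1_unit bb'; rewrite -[LHS]mulmx1 -bb' mulKmx. Qed.

Lemma invmx_mul b b' : b \in unitmx -> b' \in unitmx ->
  invmx (b *m b') = invmx b' *m invmx b.
Proof. by move=> bu bu'; apply: invmx_eq; rewrite mulmxA mulmxK // mulmxV. Qed.

Lemma act_mul b b' x : inB b -> inB b' -> act b (act b' x) = act (b *m b') x.
Proof.
move=> [ub bu] [ub' bu']; rewrite /act /= invmx_mul //; congr (_, _, _, _).
- by rewrite !mulmxA.
- by rewrite (modnp_conj _ ub (upper_inv ub bu)) !mulmxA.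
- by rewrite mulmxA.
- by rewrite mulmxA.
Qed.

Lemma conj_commutator b (r s : 'M[C]_n) (i : 'cV[C]_n) (j : 'rV[C]_n) : b \in unitmx ->
  b *m (r *m s - s *m r + i *m j) *m invmx b =
  (b *m r *m invmx b) *m (b *m s *m invmx b) - (b *m s *m invmx b) *m (b *m r *m invmx b)
  + (b *m i) *m (j *m invmx b).
Proof. by move=> bu; rewrite !conj_mulmx // mulmxDr mulmxBr mulmxDl mulmxBl !mulmxA. Qed.

Lemma modnp_commutator (r S Z : 'M[C]_n) : upper r ->
  modnp (r *m modnp S - modnp S *m r + Z) = modnp (r *m S - S *m r + Z).
Proof.
move=> ur; rewrite [LHS]modnpD [RHS]modnpD [in LHS]modnpB [in RHS]modnpB.
by rewrite (modnp_mull S ur) (modnp_mulr S ur).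
Qed.

Lemma mu_act b x : inB b -> upper (pr_r x) -> mu (act b x) = modnp (b *m mu x *m invmx b).
Proof.
move=> [ub bu] ur; have uV := upper_inv ub bu.
rewrite /mu [RHS](modnp_conj _ ub uV) (conj_commutator _ _ _ _ bu).
exact/modnp_commutator/upperM/uV/upperM.
Qed.

Lemma rss_act b x : inB b -> rss_zero x -> rss_zero (act b x).
Proof.
move=> bB [ur [_ [mu0 dr]]]; have [ub bu] := bB.
split; first exact: upperM (upperM ub ur) (upper_inv ub bu).
split; first exact: lower_modnp.
split; first by rewrite mu_act // mu0 mulmx0 mul0mx modnp0.
by move=> a c ac; rewrite /= !conj_upper_diag //; apply: dr.
Qed.

Lemma Pmap_act b x : inB b -> upper (pr_r x) -> Pmap (act b x) = Pmap x.
Proof.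
move=> bB ur; have [ub bu] := bB.
rewrite /Pmap; congr (_, _); apply/rowP => k; rewrite [LHS]mxE [RHS]mxE.
  exact: conj_upper_diag.
by rewrite sprime_modnp ?sprime_conj //; apply/upperM/(upper_inv ub bu)/upperM.
Qed.

End Action.

Section Regularity.
Variables (R : realType) (n : nat).
Local Notation C := (Cplx R).
Local Notation bquad := (bquad R n).
Implicit Type f : bquad -> C.

Definition polymx (F : bquad -> 'M[C]_n) := forall a c, polyfun (fun x => F x a c).

Lemma polyfun_sum (I : Type) (s : seq I) (P : pred I) (F : I -> bquad -> C) :
  (forall i, polyfun (F i)) -> polyfun (fun x => \sum_(i <- s | P i) F i x).
Proof.
by move=> pF; rewrite -fct_sumE; apply: big_ind => //; [exact: pf_const | exact: pf_add].
Qed.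

Lemma polyfun_trace (F : bquad -> 'M[C]_n) : polymx F -> polyfun (fun x => \tr (F x)).
Proof. by move=> pF; apply: polyfun_sum => a; apply: pF. Qed.

Lemma polymx_scalar f : polyfun f -> polymx (fun x => (f x)%:M).
Proof.
move=> pf a c; have -> : (fun x => (f x)%:M a c) = (fun x => f x * (a == c)%:R).
  by apply: funext => x; rewrite mxE mulr_natr.
exact/pf_mul/pf_const.
Qed.

Lemma polymxB (F G : bquad -> 'M[C]_n) : polymx F -> polymx G -> polymx (fun x => F x - G x).
Proof.
move=> pF pG a c; have -> : (fun x => (F x - G x) a c) = (fun x => F x a c + (-1) * G x a c).
  by apply: funext => x; rewrite !mxE mulN1r.
exact/pf_add/pf_mul/pG/pf_const.
Qed.

Lemma polymxM (F G : bquad -> 'M[C]_n) : polymx F -> polymx G -> polymx (fun x => F x *m G x).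
Proof.
move=> pF pG a c; have -> : (fun x => (F x *m G x) a c) = (fun x => \sum_k F x a k * G x k c).
  by apply: funext => x; rewrite mxE.
by apply: polyfun_sum => k; apply: pf_mul.
Qed.

Lemma polymx_prod (I : Type) (s : seq I) (P : pred I) (F : I -> bquad -> 'M[C]_n) :
  (forall i, polymx (F i)) -> polymx (fun x => \prod_(i <- s | P i) F i x).
Proof.
move=> pF; rewrite -fct_prodE; apply: big_ind => //; first exact/polymx_scalar/pf_const.
by move=> F1 F2; apply: polymxM.
Qed.

Lemma polymx_Lprod i : polymx (fun x : bquad => Lprod (pr_r x) i).
Proof.
apply: polymx_prod => k; apply: polymxB; first by move=> a c; apply: pf_r.
exact/polymx_scalar/pf_r.
Qed.

Lemma regular_diag_coord k : regular_on (@rss_zero R n) (fun x => (Pmap x).1 0 k).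
Proof.
exists (fun x => pr_r x k k), (fun _ => 1); split; first exact: pf_r.
split; first exact: pf_const.
by move=> x _; rewrite oner_neq0 divr1 mxE.
Qed.

Lemma regular_sprime_coord k : regular_on (@rss_zero R n) (fun x => (Pmap x).2 0 k).
Proof.
exists (fun x => \tr (Lprod (pr_r x) k *m pr_s x)), (fun x => \tr (Lprod (pr_r x) k)).
split; first by apply/polyfun_trace/polymxM => [|a c]; [exact: polymx_Lprod | exact: pf_s].
split; first exact/polyfun_trace/polymx_Lprod.
move=> x [ur [_ [_ dr]]]; split; first exact: tr_Lprod_neq0.
by rewrite mxE /sprime /Lmat -scalemxAl mxtraceZ mulrC.
Qed.

End Regularity.

Section DiagonalPoints.
Variables (R : realType) (n : nat).
Local Notation C := (Cplx R).
Implicit Types (d xs ys : 'rV[C]_n).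

Definition diagpt xs ys : bquad R n := (diag_mx xs, diag_mx ys, 0, 0).

Lemma distinct_diag_mx d :
  (forall a c : 'I_n, a != c -> d 0 a != d 0 c) -> distinct_diag (diag_mx d).
Proof. by move=> dd a c ac; rewrite !mxE !eqxx !mulr1n dd. Qed.

Lemma rss_diagpt xs ys : distinct_diag (diag_mx xs) -> rss_zero (diagpt xs ys).
Proof.
move=> dx; split; first exact: upper_diag_mx.
split; first exact: lower_diag_mx.
split; last exact: dx.
by rewrite /mu /= diag_mxC subrr mul0mx addr0 modnp0.
Qed.

Lemma Pmap_diagpt xs ys : distinct_diag (diag_mx xs) -> Pmap (diagpt xs ys) = (xs, ys).
Proof.
move=> dx; congr (_, _); apply/rowP => k; rewrite mxE.
  by rewrite mxE eqxx mulr1n.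
by rewrite sprime_diag_mx // mxE eqxx mulr1n.
Qed.

Lemma distinct_diag_Pmap (x : bquad R n) : rss_zero x -> distinct_diag (diag_mx (Pmap x).1).
Proof. by move=> [_ [_ [_ dr]]]; apply: distinct_diag_mx => a c ac; rewrite !mxE dr. Qed.

End DiagonalPoints.

Definition torus_path (R : realType) n (x : bquad R n) (e : Cplx R) : bquad R n :=
  let sd := diag_mx (\row_a pr_s x a a) in
  (pr_r x, sd + e ^+ 2 *: (pr_s x - sd), e *: pr_i x, e *: pr_j x).

Section Torus.
Variables (R : realType) (n : nat) (x : bquad R n) (d : 'rV[Cplx R]_n).
Hypotheses (rx : rss_zero x) (rd : pr_r x = diag_mx d).
Local Notation C := (Cplx R).
Implicit Types a c : 'I_n.
Let s := pr_s x.
Let i := pr_i x.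
Let j := pr_j x.

Lemma moment_entry a c : (c <= a)%N -> (d 0 a - d 0 c) * s a c + i a 0 * j 0 c = 0.
Proof.
move=> ca; have [_ [_ [/matrixP/(_ a c) + _]]] := rx.
rewrite /mu rd mul_diag_mx mul_mx_diag !mxE ca big_ord1.
by rewrite mulrBl [s a c * _]mulrC.
Qed.

Lemma ij_diag_eq0 a : i a 0 * j 0 a = 0.
Proof. by have := moment_entry (leqnn a); rewrite subrr mul0r add0r. Qed.

Lemma j_eq0 c : i c 0 != 0 -> j 0 c = 0.
Proof. by move=> ic; have /eqP := ij_diag_eq0 c; rewrite mulf_eq0 (negPf ic) => /eqP. Qed.

Lemma s_below_eq0 a c : (c < a)%N -> i a 0 * j 0 c = 0 -> s a c = 0.
Proof.
move=> ca ij0; have := moment_entry (ltnW ca); rewrite ij0 addr0 => /eqP.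
rewrite mulf_eq0 subr_eq0 => /orP[|/eqP //].
have [_ [_ [_ dr]]] := rx; have ac : a != c by rewrite -val_eqE gtn_eqF.
by have := dr a c ac; rewrite rd !mxE !eqxx !mulr1n => /negPf ->.
Qed.

Variable e : C.
Hypothesis e0 : e != 0.

(* Rows with [i_a != 0] get weight [e], the others [e^-1]; as [i_c j_c = 0], this
   scales [i] and [j] by [e], and the strictly lower part of [s] by [e^2]. *)
Definition torus_weight a := if i a 0 == 0 then e^-1 else e.

Let t := diag_mx (\row_a torus_weight a).

Lemma torus_weight_neq0 a : torus_weight a != 0.
Proof. by rewrite /torus_weight; case: ifP; rewrite ?invr_eq0. Qed.

Lemma torus_mulV : t *m diag_mx (\row_a (torus_weight a)^-1) = 1%:M.
Proof.
rewrite mulmx_diag -diag_const_mx; congr diag_mx.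
by apply/rowP => a; rewrite !mxE mulfV ?torus_weight_neq0.
Qed.

Lemma inB_torus : inB t.
Proof. by split; [exact: upper_diag_mx | have [] := mulmx1_unit torus_mulV]. Qed.

Lemma torus_weight_i a : torus_weight a * i a 0 = e * i a 0.
Proof. by rewrite /torus_weight; case: eqP => [->|//]; rewrite !mulr0. Qed.

Lemma torus_weight_j c : j 0 c * (torus_weight c)^-1 = e * j 0 c.
Proof.
rewrite /torus_weight; case: eqP => [_|/eqP ic]; first by rewrite invrK mulrC.
by rewrite j_eq0 // mul0r mulr0.
Qed.

Lemma torus_weight_s a c : (c < a)%N ->
  torus_weight a * s a c * (torus_weight c)^-1 = e ^+ 2 * s a c.
Proof.
move=> ca; rewrite /torus_weight.
have [ia|ia] := eqVneq (i a 0) 0; first by rewrite s_below_eq0 ?ia ?mul0r // !mulr0 mul0r.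
have [ic|ic] := eqVneq (i c 0) 0; first by rewrite invrK mulrAC -expr2.
by rewrite s_below_eq0 ?j_eq0 ?mulr0 ?mul0r.
Qed.

Lemma act_torus : act t x = torus_path x e.
Proof.
rewrite /act (invmx_eq torus_mulV) /torus_path; congr (_, _, _, _).
- by rewrite rd diag_mxC -mulmxA torus_mulV mulmx1.
- apply/matrixP => a c; rewrite mul_mx_diag mul_diag_mx !mxE.
  have [ac|ca|/val_inj <-] := ltngtP a c.
  + have [_ [ls _]] := rx.
    by rewrite -val_eqE ltn_eqF // mulr0n add0r subr0 ls // mulr0.
  + by rewrite torus_weight_s // -val_eqE gtn_eqF // mulr0n add0r subr0.
  + rewrite eqxx mulr1n subrr mulr0 addr0 mulrAC mulfV ?mul1r //.
    exact: torus_weight_neq0.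
- by apply/matrixP => a z; rewrite mul_diag_mx !mxE (ord1 z) torus_weight_i.
- by apply/matrixP => z c; rewrite mul_mx_diag !mxE (ord1 z) torus_weight_j.
Qed.

End Torus.

Lemma cvg_torus_path (R : realType) n (x : bquad R n) :
  torus_path x e @[e --> (0 : Cplx R)^'] --> torus_path x 0.
Proof.
apply: cvg_within_filter; rewrite /torus_path.
apply: (cvg_pair (G := nbhs _) (H := nbhs _)).
  2: by apply: cvgZ; [exact: cvg_id | exact: cvg_cst].
apply: (cvg_pair (G := nbhs _) (H := nbhs _)).
  2: by apply: cvgZ; [exact: cvg_id | exact: cvg_cst].
apply: (cvg_pair (G := nbhs _) (H := nbhs _)); first exact: cvg_cst.
apply: cvgD; first exact: cvg_cst.
apply: cvgZ; last exact: cvg_cst.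
by apply: cvgM; exact: cvg_id.
Qed.

Lemma closure_cvg_dnbhs0 (K : numFieldType) (T : topologicalType) (A : set T) (p : K -> T) l :
  (forall e, e != 0 -> A (p e)) -> p e @[e --> 0^'] --> l -> closure A l.
Proof.
move=> Ap; apply: (closed_cvg (closure A) (@closed_closure _ A)).
by apply: filterS (nbhs_dnbhs_neq 0) => e e0; apply/subset_closure/Ap.
Qed.

Lemma diagpt_in_orbit_closure (R : realType) n (x : bquad R n) :
  rss_zero x -> closure (Borbit x) (diagpt (Pmap x).1 (Pmap x).2).
Proof.
move=> rx; have [ur [_ [_ dr]]] := rx.
pose W := invmx (eigmx (pr_r x)); pose x1 := act W x.
have Vu := eigmx_unit ur dr.
have WB : inB W by apply: inB_inv; split; [exact: eigmx_upper | exact: Vu].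
have rd : pr_r x1 = diag_mx (Pmap x).1.
  by rewrite -[pr_r x1]/(W *m _ *m _) invmxK -mulmxA mul_eigmx // mulmxA mulVmx // mul1mx.
have -> : diagpt (Pmap x).1 (Pmap x).2 = torus_path x1 0.
  rewrite /diagpt /torus_path rd expr2 mul0r !scale0r addr0; congr (_, diag_mx _, _, _).
  apply/rowP => a; rewrite -(Pmap_act WB ur) /Pmap /= [LHS]mxE [RHS]mxE rd.
  by rewrite sprime_diag_mx //; apply: distinct_diag_Pmap.
apply: (closure_cvg_dnbhs0 _ (cvg_torus_path (x := x1))) => e e0.
exists (diag_mx (\row_a torus_weight x1 e a) *m W).
  exact: inB_mul (inB_torus x1 e0) WB.
by rewrite -(act_mul x (inB_torus x1 e0) WB) (act_torus (rss_act WB rx) rd e0).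
Qed.

Theorem mainTheorem12 (R : realType) (n : nat) :
  (* well-defined: the normalising traces are nonzero, and tr(L^iota(r) s)
     does not depend on the representative of s in gl_n / n^+ *)
  (forall x : bquad R n, rss_zero x -> forall iota : 'I_n,
      \tr (Lprod (pr_r x) iota) != 0 /\
      (forall s0 : 'M[Cplx R]_n, modnp s0 = pr_s x ->
         \tr (Lmat (pr_r x) iota *m s0) = sprime (pr_r x) (pr_s x) iota)) /\
  (* regular *)
  (forall k : 'I_n,
      regular_on (@rss_zero R n) (fun x => (Pmap x).1 0 k) /\
      regular_on (@rss_zero R n) (fun x => (Pmap x).2 0 k)) /\
  (* B-invariant *)
  (forall b (x : bquad R n), inB b -> rss_zero x -> Pmap (act b x) = Pmap x) /\
  (* surjective onto {(x,y) : x_iota <> x_gamma for iota <> gamma} *)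
  (forall xs ys : 'rV[Cplx R]_n,
      (forall a c : 'I_n, a != c -> xs 0 a != xs 0 c) ->
      exists2 x, rss_zero x & Pmap x = (xs, ys)) /\
  (* separates orbit closures (closures taken in mu^{-1}(0)^{rss}) *)
  (forall x y : bquad R n, rss_zero x -> rss_zero y ->
      (closure (Borbit x) `&` @rss_zero R n) `&` (closure (Borbit y) `&` @rss_zero R n) = set0 ->
      Pmap x <> Pmap y).
Proof.
split.
  move=> x [ur [_ [_ dr]]] iota; split; first exact: tr_Lprod_neq0.
  by move=> s0 <-; rewrite sprime_modnp.
split; first by move=> k; split; [exact: regular_diag_coord | exact: regular_sprime_coord].
split; first by move=> b x bB [ur _]; exact: Pmap_act.
split.
  move=> xs ys /distinct_diag_mx dxs.
  by exists (diagpt xs ys); [exact: rss_diagpt | exact: Pmap_diagpt].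
move=> x y rx ry disj Pxy.
have rz := rss_diagpt (Pmap y).2 (distinct_diag_Pmap ry).
have := diagpt_in_orbit_closure rx; have := diagpt_in_orbit_closure ry.
rewrite Pxy => cy cx.
suff : (set0 : set (bquad R n)) (diagpt (Pmap y).1 (Pmap y).2) by [].
by rewrite -disj.
Qed.
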